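(* Let $s\ge1$, $n\ge1$ be integers and $J>0$. The ground space of $H=H_n^s+H_n^J$ is the span of the product states $\{|{\bf t}\rangle:{\bf t}\in T_n\}$ (each of which is the uniform superposition over its own equivalence class, a singleton), and it has dimension $|T_n|$.
   Context: Let $\Sigma=\{-s,\dots,s\}$, $\Sigma_*=\Sigma\setminus\{0\}$. The spin chain on $n$ sites has local space $\mathbb{C}^{2s+1}$ with basis $\{|j\rangle:j\in\Sigma\}$ and $|{\bf t}\rangle=|t_1\rangle\otimes\cdots\otimes|t_n\rangle$. For $m\in\Sigma_*$, $P^m=|\phi_m\rangle\langle\phi_m|$ with $|\phi_m\rangle=\frac1{\sqrt2}(|0,m\rangle-|m,0\rangle)$; for $m\in\{1,\dots,s\}$, $Q^m=|\chi_m\rangle\langle\chi_m|$ with $|\chi_m\rangle=\frac1{\sqrt2}(|0,0\rangle-|m,-m\rangle)$, acting on two neighboring spins. $H_n^s=\sum_{k=1}^{n-1}\big(\sum_{m\in\Sigma_*}P^m_{k,k+1}+\sum_{m=1}^sQ^m_{k,k+1}\big)$ and $H_n^J=J\sum_{k=1}^n(|0\rangle\langle0|)_k$. $T_n\subseteq\Sigma_*^n$ is the set of strings $t_1\cdots t_n$ with no index $j$ such that $t_j=m\in\{1,\dots,s\}$ and $t_{j+1}=-m$. Equivalence of strings in $\Sigma^n$ is generated by the local moves $(0,m)\leftrightarrow(m,0)$ for $m\in\Sigma_*$ and $(0,0)\leftrightarrow(m,-m)$ for $m\in\{1,\dots,s\}$ on adjacent positions. *)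

From HB Require Import structures.
From mathcomp Require Import all_boot all_order all_algebra all_field.
Set Implicit Arguments. Unset Strict Implicit. Unset Printing Implicit Defensive.
Import Order.TTheory GRing.Theory Num.Theory.
Local Open Scope ring_scope.

(* Local spin states: Sigma = {-s..s}, encoded by 'I_(2s+1), a |-> a - s. *)
Definition site (s : nat) := 'I_(s.*2.+1).
Definition sp (s : nat) (a : 'I_(s.*2.+1)) : int := (a : nat)%:Z - s%:Z.

Definition config (s n : nat) := (n.-tuple 'I_(s.*2.+1)).
Definition at_ (s n : nat) (x : n.-tuple 'I_(s.*2.+1)) (j : nat) : 'I_(s.*2.+1) :=
  nth ord0 (val x) j.

Definition phi_amp (s : nat) (m : int) (a b : 'I_(s.*2.+1)) : algC :=
  (sqrtC 2)^-1 * (((sp a == 0) && (sp b == m))%:R - ((sp a == m) && (sp b == 0))%:R).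
Definition chi_amp (s : nat) (m : int) (a b : 'I_(s.*2.+1)) : algC :=
  (sqrtC 2)^-1 * (((sp a == 0) && (sp b == 0))%:R - ((sp a == m) && (sp b == - m))%:R).

(* two-site matrix element <a b| (sum_{m in Sigma_*} P^m + sum_{m=1}^s Q^m) |c d> *)
Definition h2 (s : nat) (a b c d : 'I_(s.*2.+1)) : algC :=
  \sum_(i : 'I_(s.*2.+1) | sp i != 0) phi_amp (sp i) a b * (phi_amp (sp i) c d)^*
  + \sum_(i : 'I_(s.*2.+1) | 0 < sp i) chi_amp (sp i) a b * (chi_amp (sp i) c d)^*.

(* x and y agree outside the sites k, k+1 (0-based) *)
Definition agree_off (s n : nat) (x y : n.-tuple 'I_(s.*2.+1)) (k : nat) : bool :=
  [forall j : 'I_n, ((j : nat) != k) && ((j : nat) != k.+1) ==> (at_ x j == at_ y j)].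

Definition Hs_elt (s n : nat) (x y : n.-tuple 'I_(s.*2.+1)) : algC :=
  \sum_(k < n.-1) (agree_off x y k)%:R *
     h2 (at_ x k) (at_ x k.+1) (at_ y k) (at_ y k.+1).

Definition HJ_elt (s n : nat) (J : algC) (x y : n.-tuple 'I_(s.*2.+1)) : algC :=
  J * (x == y)%:R * \sum_(k < n) (sp (at_ x k) == 0)%:R.

Definition Hmat (s n : nat) (J : algC) : 'M[algC]_(#|{: n.-tuple 'I_(s.*2.+1)}|) :=
  \matrix_(i, j) (Hs_elt (enum_val i) (enum_val j) + HJ_elt J (enum_val i) (enum_val j)).

(* MathComp's eigenspaces use row vectors (v *m A = a v).  A ket sum_j v_j |e_j>
   is encoded as the row vector v; H acts on it as v |-> v *m (Hmat)^T. *)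
Definition Hop (s n : nat) (J : algC) := (Hmat s n J)^T.

Definition ket (s n : nat) (t : n.-tuple 'I_(s.*2.+1)) : 'rV[algC]_(#|{: n.-tuple 'I_(s.*2.+1)}|) :=
  delta_mx 0 (enum_rank t).

Definition ground_energy (N : nat) (A : 'M[algC]_N) (E : algC) : Prop :=
  eigenvalue A E /\ forall e, eigenvalue A e -> E <= e.

Definition Tn (s n : nat) (t : n.-tuple 'I_(s.*2.+1)) : bool :=
  [forall k : 'I_n, sp (at_ t k) != 0] &&
  [forall k : 'I_n, ~~ [&& (0 < sp (at_ t k)), (k.+1 < n)%N & (sp (at_ t k.+1) == - sp (at_ t k))]].

Definition move (s : nat) (a b c d : 'I_(s.*2.+1)) : bool :=
  [|| [&& sp a == 0, sp d == 0, sp b == sp c & sp b != 0],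
      [&& sp b == 0, sp c == 0, sp a == sp d & sp a != 0],
      [&& sp a == 0, sp b == 0, 0 < sp c & sp d == - sp c]
    | [&& sp c == 0, sp d == 0, 0 < sp a & sp b == - sp a]].

Definition step (s n : nat) (x y : n.-tuple 'I_(s.*2.+1)) : bool :=
  [exists k : 'I_n, [&& (k.+1 < n)%N, agree_off x y k &
      move (at_ x k) (at_ x k.+1) (at_ y k) (at_ y k.+1)]].

Definition equiv_str (s n : nat) (x y : n.-tuple 'I_(s.*2.+1)) : bool :=
  connect (@step s n) x y.

From HB Require Import structures.
From mathcomp Require Import all_boot all_order all_algebra all_field.
From mathcomp Require Import ring.
Set Implicit Arguments.
Unset Strict Implicit.
Unset Printing Implicit Defensive.
Import Order.TTheory GRing.Theory Num.Theory.
Local Open Scope ring_scope.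

(* H = H_n^s + H_n^J is a sum of positive semidefinite pieces: on every bond each
   projector P^m, Q^m contributes a Gram form, and H_n^J is diagonal with entry J
   times the number of zeros of the string.  A product state |t> with t in T_n is
   killed by every piece, so the ground energy is 0.  Conversely, a zero-energy
   state vanishes on strings containing a 0 (because J > 0), and on zero-free
   strings containing a pair (m, -m) at some bond, because the only other strings
   overlapping chi_m on that bond carry a 0.  Strings of T_n admit no local move,
   so their classes are singletons. *)

Section Forms.
Variables (C : numClosedFieldType) (T : finType).

Definition qform (A : T -> T -> C) (V : T -> C) : C :=
  \sum_x \sum_y (V x)^* * A x y * V y.

Lemma eq_qform (A B : T -> T -> C) V : A =2 B -> qform A V = qform B V.
Proof. by move=> eqAB; apply: eq_bigr => x _; apply: eq_bigr => y _; rewrite eqAB. Qed.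

Lemma qformD (A B : T -> T -> C) V :
  qform (fun x y => A x y + B x y) V = qform A V + qform B V.
Proof.
rewrite -big_split; apply: eq_bigr => x _; rewrite -big_split.
by apply: eq_bigr => y _; rewrite mulrDr mulrDl.
Qed.

Lemma qform_sum (I : Type) (r : seq I) (P : pred I) (F : I -> T -> T -> C) V :
  qform (fun x y => \sum_(i <- r | P i) F i x y) V =
  \sum_(i <- r | P i) qform (F i) V.
Proof.
rewrite [RHS]exchange_big; apply: eq_bigr => x _.
rewrite [RHS]exchange_big; apply: eq_bigr => y _.
by rewrite big_distrr big_distrl.
Qed.

Variables (K : finType) (pi : T -> K).

Definition gram_form (g : T -> C) : C :=
  \sum_x \sum_y (pi x == pi y)%:R * ((g x)^* * g y).

Lemma gram_formE g : gram_form g = \sum_r `|\sum_(x | pi x == r) g x| ^+ 2.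
Proof.
transitivity (\sum_r \sum_(x | pi x == r) (g x)^* * \sum_(y | pi y == pi x) g y).
  rewrite /gram_form (partition_big pi xpredT) //=; apply: eq_bigr => r _.
  apply: eq_bigr => x _; rewrite big_distrr [RHS]big_mkcond /=.
  by apply: eq_bigr => y _; rewrite eq_sym; case: eqP; rewrite ?mul1r ?mul0r.
apply: eq_bigr => r _; rewrite normCK mulrC rmorph_sum big_distrl /=.
by apply: eq_bigr => x /eqP ->.
Qed.

Lemma gram_form_ge0 g : 0 <= gram_form g.
Proof. by rewrite gram_formE; apply: sumr_ge0 => r _; rewrite exprn_ge0. Qed.

Lemma gram_form_eq0 g :
  gram_form g = 0 -> forall r, \sum_(x | pi x == r) g x = 0.
Proof.
rewrite gram_formE => /psumr_eq0P g0 r.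
apply/eqP; rewrite -normr_eq0 -sqrf_eq0; apply/eqP.
by apply: g0 => // r' _; rewrite exprn_ge0.
Qed.

Lemma qform_gram (f V : T -> C) :
  qform (fun x y => (pi x == pi y)%:R * (f x * (f y)^*)) V =
  gram_form (fun x => (f x)^* * V x).
Proof.
apply: eq_bigr => x _; apply: eq_bigr => y _.
by rewrite rmorphM /= (conjCK (f x)); ring.
Qed.

End Forms.

Lemma sum_enum_rank (M : nmodType) (T : finType) (F : 'I_#|T| -> M) :
  \sum_i F i = \sum_x F (enum_rank x).
Proof.
by rewrite (reindex enum_rank) //; exists enum_val => x _; rewrite ?enum_rankK ?enum_valK.
Qed.

Section MatrixForms.
Variables (C : numClosedFieldType) (m : nat).

Lemma qform_mulmx_tr (A : 'M[C]_m) (v : 'rV_m) :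
  qform A (v 0) = \sum_i (v 0 i)^* * (v *m A^T) 0 i.
Proof.
apply: eq_bigr => i _; rewrite mxE big_distrr /=.
by apply: eq_bigr => j _; rewrite !mxE mulrAC -mulrA.
Qed.

Lemma eigenvalue_trmx_ge0 (A : 'M[C]_m) e :
  (forall v : 'rV_m, 0 <= qform A (v 0)) -> eigenvalue A^T e -> 0 <= e.
Proof.
move=> A_ge0 /eigenvalueP[v ve v_neq0].
have := A_ge0 v; rewrite qform_mulmx_tr ve.
under eq_bigr => i _ do rewrite mxE mulrCA [_^* * _]mulrC -normCK.
rewrite -mulr_sumr pmulr_lge0 // lt_def sumr_ge0 ?andbT => [|i _]; last exact: exprn_ge0.
apply: contra v_neq0 => /eqP /psumr_eq0P v0; apply/eqP/rowP => j; rewrite mxE.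
by apply/eqP; rewrite -normr_eq0 -sqrf_eq0 v0 // => i _; rewrite exprn_ge0.
Qed.

Lemma qform_enum (T : finType) (B : T -> T -> C) (V : 'I_#|T| -> C) :
  qform (\matrix_(i, j) B (enum_val i) (enum_val j)) V =
  qform B (fun x => V (enum_rank x)).
Proof.
rewrite /qform sum_enum_rank; apply: eq_bigr => x _; rewrite sum_enum_rank.
by apply: eq_bigr => y _; rewrite mxE !enum_rankK.
Qed.

End MatrixForms.

Lemma mxrank_sum_delta_enum (F : fieldType) (T : finType) (P : pred T) :
  \rank (\sum_(t | P t) <<delta_mx 0 (enum_rank t) : 'rV[F]_#|T| >>)%MS = #|P|.
Proof.
pose M := \matrix_(i < #|P|) (delta_mx 0 (enum_rank (enum_val i)) : 'rV[F]_#|T|).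
have eqM : (\sum_(t | P t) <<delta_mx 0 (enum_rank t) : 'rV[F]_#|T| >> == M)%MS.
  apply/andP; split.
    apply/sumsmx_subP => t Pt; rewrite genmxE.
    rewrite -(enum_rankK_in Pt Pt) -(rowK (fun i => delta_mx 0 (enum_rank (enum_val i)))).
    exact: row_sub.
  apply/row_subP => i; rewrite rowK.
  by apply: (sumsmx_sup (enum_val i)); [exact: enum_valP | rewrite genmxE].
have MMt : M *m M^T = 1%:M.
  apply/matrixP => i j; rewrite !mxE (bigD1 (enum_rank (enum_val i))) //= big1.
    by rewrite !mxE !eqxx mul1r addr0 (inj_eq enum_rank_inj) (inj_eq enum_val_inj).
  by move=> k k_neq; rewrite !mxE (negbTE k_neq) mul0r.
rewrite (eqmx_rank eqM); apply/eqP; rewrite eqn_leq rank_leq_row /=.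
by rewrite -[X in (X <= _)%N](mxrank1 F) -MMt mxrankM_maxl.
Qed.

Lemma ground_energy_unique (N : nat) (A : 'M[algC]_N) E E' :
  ground_energy A E -> ground_energy A E' -> E = E'.
Proof. by move=> [eE minE] [eE' minE']; apply/le_anti; rewrite minE // minE'. Qed.

Section SpinChain.
Variables (s n : nat).
Local Notation string := (n.-tuple 'I_(s.*2.+1)).

Lemma sp_inj : injective (@sp s).
Proof. by move=> a b /addIr [] /val_inj. Qed.

Lemma at_tnth (x : string) (i : 'I_n) : at_ x i = tnth x i.
Proof. by rewrite /at_ (tnth_nth ord0). Qed.

Definition erase_bond (k : nat) (x : string) : string :=
  [tuple if (i == k :> nat) || (i == k.+1 :> nat) then ord0 else tnth x i | i < n].

Lemma agree_offE (x y : string) k : agree_off x y k = (erase_bond k x == erase_bond k y).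
Proof.
apply/forallP/eqP => [agree | eq_xy].
  apply: eq_from_tnth => i; rewrite !tnth_mktuple; case: ifP => // /norP[ik ik1].
  by move: (agree i); rewrite ik ik1 !at_tnth => /eqP.
move=> i; apply/implyP => /andP[ik ik1].
move/(congr1 (fun t => tnth t i)): eq_xy; rewrite !tnth_mktuple (negbTE ik) (negbTE ik1).
by rewrite /= !at_tnth => ->.
Qed.

Lemma erase_bond_inj k (x y : string) :
  erase_bond k x = erase_bond k y -> at_ x k = at_ y k -> at_ x k.+1 = at_ y k.+1 ->
  x = y.
Proof.
move=> eq_xy eq_k eq_k1; apply: eq_from_tnth => i.
move/(congr1 (fun t => tnth t i)): eq_xy; rewrite !tnth_mktuple.
by case: ifP => [/orP[] /eqP ik _ | _ //]; rewrite -!at_tnth ik.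
Qed.

Lemma Tn_sp_neq0 (t : string) k : Tn t -> (k < n)%N -> sp (at_ t k) != 0.
Proof. by case/andP=> /forallP t_neq0 _ kn; apply: (t_neq0 (Ordinal kn)). Qed.

Lemma Tn_no_pair (t : string) k :
  Tn t -> (k.+1 < n)%N -> 0 < sp (at_ t k) -> sp (at_ t k.+1) != - sp (at_ t k).
Proof.
case/andP=> _ /forallP no_pair kn t_gt0.
by move: (no_pair (Ordinal (ltnW kn))); rewrite /= t_gt0 kn.
Qed.

Lemma not_Tn_cases (x : string) :
  ~~ Tn x ->
  (exists k : 'I_n, sp (at_ x k) == 0) \/
  (exists k : 'I_n, [&& 0 < sp (at_ x k), (k.+1 < n)%N & sp (at_ x k.+1) == - sp (at_ x k)]).
Proof.
rewrite negb_and !negb_forall => /orP[] /existsP[k]; rewrite negbK => ?;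
  [left | right]; by exists k.
Qed.

Lemma Tn_no_step (t u : string) : Tn t -> ~~ step t u.
Proof.
move=> Tt; apply/existsP => -[k /and3P[kn _]].
rewrite /move (negbTE (Tn_sp_neq0 Tt (ltnW kn))) (negbTE (Tn_sp_neq0 Tt kn)) /=.
by case/and4P=> _ _ t_gt0 /eqP pair; move: (Tn_no_pair Tt kn t_gt0); rewrite pair eqxx.
Qed.

Lemma Tn_equiv_str (t u : string) : Tn t -> equiv_str t u -> u = t.
Proof.
move=> Tt /connectP[[|y p] /= path_tu ->] //.
by case/andP: path_tu => tu _; move: (Tn_no_step y Tt); rewrite tu.
Qed.

Lemma Tn_exists : (0 < s)%N -> exists t : string, Tn t.
Proof.
move=> s_gt0; have one_lt : (s.+1 < s.*2.+1)%N by rewrite ltnS -addnn -addn1 leq_add2l.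
pose one := Ordinal one_lt.
have sp_one : sp one = 1 by rewrite /sp /= -addn1 PoszD addrAC subrr add0r.
have at_one k : (k < n)%N -> at_ [tuple of nseq n one] k = one.
  by move=> kn; rewrite /at_ /= nth_nseq kn.
exists [tuple of nseq n one]; apply/andP; split; apply/forallP => k.
  by rewrite at_one // sp_one.
by apply/negP => /and3P[_ kn /eqP]; rewrite !at_one ?sp_one // ltnW.
Qed.

Lemma chi_ampE m (a b : 'I_(s.*2.+1)) :
  sp a != 0 -> chi_amp m a b = - (sqrtC 2)^-1 * ((sp a == m) && (sp b == - m))%:R.
Proof. by rewrite /chi_amp => /negbTE ->; rewrite sub0r mulrN mulNr. Qed.

Lemma h2_eq0 (a b c d : 'I_(s.*2.+1)) :
  sp c != 0 -> sp d != 0 -> ~~ ((0 < sp c) && (sp d == - sp c)) -> h2 a b c d = 0.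
Proof.
move=> c_neq0 d_neq0 no_pair; rewrite /h2 !big1 ?addr0 // => i i_gt0.
  rewrite [chi_amp _ c d]chi_ampE //; case: (boolP (_ && _)) => [/andP[/eqP ci /eqP di]|_].
    by move: no_pair; rewrite ci i_gt0 di eqxx.
  by rewrite mulr0 conjC0 mulr0.
by rewrite /phi_amp (negbTE c_neq0) (negbTE d_neq0) !andbF subrr mulr0 conjC0 mulr0.
Qed.

Variable J : algC.

Lemma Hop_ket (t : string) : Tn t -> ket t *m Hop s n J = 0.
Proof.
move=> Tt; rewrite /ket -rowE; apply/rowP => j; rewrite !mxE enum_rankK.
rewrite /Hs_elt big1 ?add0r => [|k _]; last first.
  have kn : (k.+1 < n)%N by rewrite -ltn_predRL.
  rewrite h2_eq0 ?mulr0 ?(Tn_sp_neq0 Tt) ?(ltnW kn) //.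
  by apply/negP => /andP[t_gt0 /eqP pair]; move: (Tn_no_pair Tt kn t_gt0); rewrite pair eqxx.
rewrite /HJ_elt; case: eqP => [->|_]; last by rewrite mulr0 mul0r.
by rewrite big1 ?mulr0 // => k _; rewrite (negbTE (Tn_sp_neq0 Tt (ltn_ord k))).
Qed.

Definition zero_count (x : string) : algC := \sum_(k < n) (sp (at_ x k) == 0)%:R.

Lemma zero_count_ge0 x : 0 <= zero_count x.
Proof. by apply: sumr_ge0 => k _; rewrite ler0n. Qed.

Definition bond_energy (k : nat) (V : string -> algC) : algC :=
  \sum_(i : 'I_(s.*2.+1) | sp i != 0)
     gram_form (erase_bond k) (fun x => (phi_amp (sp i) (at_ x k) (at_ x k.+1))^* * V x)
  + \sum_(i : 'I_(s.*2.+1) | 0 < sp i)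
     gram_form (erase_bond k) (fun x => (chi_amp (sp i) (at_ x k) (at_ x k.+1))^* * V x).

Definition site_energy (V : string -> algC) : algC :=
  \sum_x J * zero_count x * `|V x| ^+ 2.

Lemma qform_bond k V :
  qform (fun x y => (agree_off x y k)%:R * h2 (at_ x k) (at_ x k.+1) (at_ y k) (at_ y k.+1)) V =
  bond_energy k V.
Proof.
rewrite /h2; under eq_qform => x y do rewrite agree_offE mulrDr !mulr_sumr.
by rewrite qformD !qform_sum; congr (_ + _); apply: eq_bigr => i _; apply: qform_gram.
Qed.

Lemma qform_site V : qform (HJ_elt J) V = site_energy V.
Proof.
apply: eq_bigr => x _; rewrite (bigD1 x) //= big1 => [|y y_neq_x]; last first.
  by rewrite /HJ_elt eq_sym (negbTE y_neq_x) mulr0 mul0r mulr0 mul0r.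
by rewrite /HJ_elt eqxx /= normCK addr0 -/(zero_count x); ring.
Qed.

Lemma qform_Hmat (v : 'rV[algC]_#|{: string}|) :
  qform (Hmat s n J) (v 0) =
  \sum_(k < n.-1) bond_energy k (fun x => v 0 (enum_rank x))
  + site_energy (fun x => v 0 (enum_rank x)).
Proof.
rewrite /Hmat (qform_enum (fun x y => Hs_elt x y + HJ_elt J x y)) qformD /Hs_elt qform_sum.
by congr (_ + _); [apply: eq_bigr => k _; apply: qform_bond | apply: qform_site].
Qed.

Lemma bond_energy_ge0 k V : 0 <= bond_energy k V.
Proof. by apply: addr_ge0; apply: sumr_ge0 => i _; apply: gram_form_ge0. Qed.

Lemma site_energy_ge0 V : 0 <= J -> 0 <= site_energy V.
Proof.
by move=> J_ge0; apply: sumr_ge0 => x _; rewrite !mulr_ge0 ?zero_count_ge0 ?exprn_ge0.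
Qed.

Lemma site_energy_eq0 V :
  0 < J -> site_energy V = 0 -> forall x (k : 'I_n), sp (at_ x k) == 0 -> V x = 0.
Proof.
move=> J_gt0 site0 x k xk0.
have zx_gt0 : 0 < zero_count x.
  by rewrite /zero_count (bigD1 k) //= xk0 ltr_pwDl ?sumr_ge0 // => j _; rewrite ler0n.
have term0 : J * zero_count x * `|V x| ^+ 2 = 0.
  apply: (psumr_eq0P _ site0) => // y _.
  by rewrite !mulr_ge0 ?zero_count_ge0 ?exprn_ge0 ?(ltW J_gt0).
by move/eqP: term0; rewrite !mulf_eq0 (gt_eqF J_gt0) (gt_eqF zx_gt0) /= orbb normr_eq0 => /eqP.
Qed.

Lemma bond_energy_eq0 k V (x : string) :
  bond_energy k V = 0 -> (forall y : string, sp (at_ y k) == 0 -> V y = 0) ->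
  0 < sp (at_ x k) -> sp (at_ x k.+1) = - sp (at_ x k) -> V x = 0.
Proof.
move=> bond0 V0 x_gt0 pair.
have chi0 : gram_form (erase_bond k)
    (fun y => (chi_amp (sp (at_ x k)) (at_ y k) (at_ y k.+1))^* * V y) = 0.
  move/eqP: bond0; rewrite paddr_eq0; try by apply: sumr_ge0 => i _; apply: gram_form_ge0.
  case/andP=> _ /eqP chi_sum0.
  by apply: (psumr_eq0P _ chi_sum0) => // i _; apply: gram_form_ge0.
(* Among the strings with the erasure of x, only x itself and strings with a 0 at
   site k overlap chi_m on bond k. *)
have := gram_form_eq0 chi0 (erase_bond k x).
rewrite (bigD1 x) //= big1 ?addr0 => [|y /andP[/eqP same_erasure y_neq_x]].
  rewrite chi_ampE ?(gt_eqF x_gt0) // eqxx pair eqxx mulr1 rmorphN /= => /eqP.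
  by rewrite mulf_eq0 oppr_eq0 conjC_eq0 invr_eq0 sqrtC_eq0 pnatr_eq0 /= => /eqP.
case: (boolP (sp (at_ y k) == 0)) => [/V0 -> | y_neq0]; first by rewrite mulr0.
rewrite chi_ampE //; case: (boolP (_ && _)) => [/andP[/eqP yk /eqP yk1]|_].
  case/eqP: y_neq_x; apply: erase_bond_inj same_erasure _ _; apply: sp_inj.
    by rewrite yk.
  by rewrite yk1 pair.
by rewrite mulr0 conjC0 mul0r.
Qed.

Lemma Hop_eigenvalue_ge0 e : 0 <= J -> eigenvalue (Hop s n J) e -> 0 <= e.
Proof.
move=> J_ge0; apply: eigenvalue_trmx_ge0 => v.
by rewrite qform_Hmat addr_ge0 ?site_energy_ge0 ?sumr_ge0 // => k _; apply: bond_energy_ge0.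
Qed.

Lemma Hop_kernel_supp (v : 'rV[algC]_#|{: string}|) :
  0 < J -> v *m Hop s n J = 0 -> forall x, ~~ Tn x -> v 0 (enum_rank x) = 0.
Proof.
move=> J_gt0 Hv.
have /eqP : qform (Hmat s n J) (v 0) = 0.
  by rewrite qform_mulmx_tr Hv big1 // => i _; rewrite mxE mulr0.
rewrite qform_Hmat paddr_eq0 ?site_energy_ge0 ?(ltW J_gt0) //; last first.
  by apply: sumr_ge0 => k _; apply: bond_energy_ge0.
case/andP=> /eqP bonds0 /eqP /(site_energy_eq0 J_gt0) zero_site.
move=> x /not_Tn_cases[[k /zero_site] // | [k /and3P[x_gt0 kn /eqP pair]]].
have kn1 : (k < n.-1)%N by rewrite ltn_predRL.
apply: (bond_energy_eq0 (V := fun y => v 0 (enum_rank y)) _ _ x_gt0 pair) => [|y].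
  by apply: (psumr_eq0P _ bonds0 (i := Ordinal kn1)) => // j _; apply: bond_energy_ge0.
exact: (zero_site y (Ordinal (ltnW kn))).
Qed.

Lemma Hop_eigenvalue0 : (0 < s)%N -> eigenvalue (Hop s n J) 0.
Proof.
move=> s_gt0; have [t Tt] := Tn_exists s_gt0.
apply/eigenvalueP; exists (ket t); first by rewrite scale0r Hop_ket.
by apply/eqP => /matrixP/(_ 0 (enum_rank t)); rewrite !mxE !eqxx => /eqP; rewrite oner_eq0.
Qed.

Lemma Hop_ground_energy : (0 < s)%N -> 0 <= J -> ground_energy (Hop s n J) 0.
Proof.
move=> s_gt0 J_ge0; split; first exact: Hop_eigenvalue0.
by move=> e; apply: Hop_eigenvalue_ge0.
Qed.

Lemma eigenspace_Hop0 :
  0 < J -> (eigenspace (Hop s n J) 0 == \sum_(t | Tn t) <<ket t>>)%MS.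
Proof.
move=> J_gt0; apply/andP; split; last first.
  apply/sumsmx_subP => t Tt; rewrite genmxE; apply/eigenspaceP.
  by rewrite scale0r Hop_ket.
apply/rV_subP => v /eigenspaceP; rewrite scale0r => Hv.
rewrite (row_sum_delta v) sum_enum_rank; apply: summx_sub => x _.
have [Tx | /(Hop_kernel_supp J_gt0 Hv) ->] := boolP (Tn x); last by rewrite scale0r sub0mx.
by rewrite scalemx_sub // (sumsmx_sup x) // genmxE.
Qed.

End SpinChain.

Theorem lemma8 (s n : nat) (J : algC) :
  (1 <= s)%N -> (1 <= n)%N -> 0 < J ->
  (exists E, ground_energy (Hop s n J) E) /\
  (forall E, ground_energy (Hop s n J) E ->
     (eigenspace (Hop s n J) E == \sum_(t | Tn t) <<ket t>>)%MS /\
     \rank (eigenspace (Hop s n J) E) = #|[pred t : n.-tuple 'I_(s.*2.+1) | Tn t]|) /\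
  (forall t u : n.-tuple 'I_(s.*2.+1), Tn t -> equiv_str t u -> u = t).
Proof.
move=> s_gt0 _ J_gt0; have ground0 := Hop_ground_energy n s_gt0 (ltW J_gt0).
split; last split; last exact: Tn_equiv_str.
  by exists 0.
move=> E /(ground_energy_unique ground0) <-; have eq_ker := eigenspace_Hop0 s n J_gt0.
by split; rewrite // (eqmx_rank eq_ker); apply: (mxrank_sum_delta_enum _ (@Tn s n)).
Qed.
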